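(* For every positive integer $n$, $$(2x+1)\sum_{k=1}^nk(k+1)(2k+1)(-1)^{n-k}w_k(x)^2=n(n+1)(n+2)w_n(x)w_{n+1}(x),$$ where $w_m(x)=\sum_{k=1}^m w(m,k)x^{k-1}$ with $w(m,k)=\frac1k\binom{m-1}{k-1}\binom{m+k}{k-1}$.
   Context: The identity is an identity of polynomials in $x$. *)

From mathcomp Require Import all_boot all_order all_algebra.
Set Implicit Arguments. Unset Strict Implicit. Unset Printing Implicit Defensive.
Import Order.TTheory GRing.Theory Num.Theory.
Local Open Scope ring_scope.

Definition wcoef (m k : nat) : rat :=
  ('C(m.-1, k.-1) * 'C(m + k, k.-1))%:R / k%:R.

Definition wpoly (m : nat) : {poly rat} :=
  \sum_(1 <= k < m.+1) wcoef m k *: 'X^(k.-1).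

(** The whole identity rests on the three-term recurrence
    [(2x+1)(2n+3) w_(n+1) = (n+3) w_(n+2) + n w_n].  Given it, induction on [n]
    is a telescoping: the new term [(n+1)(n+2)(2n+3)(2x+1) w_(n+1)^2] minus the
    previous right-hand side [n(n+1)(n+2) w_n w_(n+1)] is
    [(n+1)(n+2)(n+3) w_(n+1) w_(n+2)].  The recurrence is checked coefficientwise:
    [k! (k+1)! w(m,k+1)] is the product of the falling factorial [(m-1)_k] and the
    rising factorial [(m+2)^(k)], so the four coefficients involved are explicit
    multiples of one common product and the identity collapses to a polynomial
    identity in [n] and [k]. *)

From mathcomp Require Import all_boot all_order all_algebra.
From mathcomp Require Import ring.
Import GRing.Theory Num.Theory.

Set Implicit Arguments.
Unset Strict Implicit.
Local Open Scope ring_scope.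

Section Factorials.

Variable R : pzRingType.
Implicit Types (y : R) (a j : nat).

Definition falling y j : R := \prod_(t < j) (y - t%:R).
Definition rising y j : R := \prod_(t < j) (y + t%:R).

Lemma fallingS y j : falling y j.+1 = y * falling (y - 1) j.
Proof.
rewrite /falling big_ord_recl subr0; congr (_ * _); apply: eq_bigr => t _.
by rewrite lift0 -add1n natrD opprD addrA.
Qed.

Lemma fallingSr y j : falling y j.+1 = falling y j * (y - j%:R).
Proof. by rewrite /falling big_ord_recr. Qed.

Lemma risingS y j : rising y j.+1 = y * rising (y + 1) j.
Proof.
rewrite /rising big_ord_recl addr0; congr (_ * _); apply: eq_bigr => t _.
by rewrite lift0 -add1n natrD addrA.
Qed.

Lemma risingSr y j : rising y j.+1 = rising y j * (y + j%:R).
Proof. by rewrite /rising big_ord_recr. Qed.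

Lemma falling_natS a j : falling a.+1%:R j.+1 = a.+1%:R * falling a%:R j.
Proof. by rewrite fallingS -addn1 natrD addrK. Qed.

Lemma mulr_falling_pred a j : a%:R * falling a.-1%:R j = falling a%:R j.+1.
Proof. by case: a => [|a]; rewrite ?falling_natS // fallingS !mul0r. Qed.

Lemma natr_ffact a j : (a ^_ j)%:R = falling a%:R j.
Proof.
elim: j a => [|j IHj] a; first by rewrite ffactn0 /falling big_ord0.
by case: a => [|a]; rewrite ?falling_natS ffactnS ?mul0n ?fallingS ?mul0r // natrM IHj.
Qed.

Lemma natr_ffact_rising a j : ((a + j) ^_ j)%:R = rising a.+1%:R j.
Proof.
elim: j => [|j IHj]; first by rewrite ffactn0 /rising big_ord0.
rewrite addnS ffactSS natrM IHj risingSr -natrD addSn.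
exact/esym/commr_nat.
Qed.

End Factorials.

Lemma wcoef0 m : wcoef m 0 = 0.
Proof. by rewrite /wcoef invr0 mulr0. Qed.

Lemma wcoef1 m : wcoef m 1 = 1.
Proof. by rewrite /wcoef !bin0 divr1. Qed.

Lemma wcoefE m k : wcoef m k.+1 =
  falling m.-1%:R k * rising m.+2%:R k / (k`!%:R ^+ 2 * k.+1%:R).
Proof.
have fact_neq0 : k`!%:R != 0 :> rat by rewrite pnatr_eq0 -lt0n fact_gt0.
have natr_bin a : 'C(a, k)%:R = (a ^_ k)%:R / k`!%:R :> rat.
  by rewrite -bin_ffact natrM mulfK.
rewrite /wcoef natrM !natr_bin -addSnnS natr_ffact_rising natr_ffact.
by field; rewrite nat1r pnatr_eq0 fact_neq0.
Qed.

Lemma coef_wpoly m i : (0 < m)%N -> (wpoly m)`_i = wcoef m i.+1.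
Proof.
move=> m_gt0; rewrite /wpoly big_add1 /= big_mkord.
rewrite -(poly_def m (fun k => wcoef m k.+1)) coef_poly.
by case: ltnP => // le_m_i; rewrite /wcoef bin_small ?mul0n ?mul0r // prednK.
Qed.

Lemma wcoef_rec n i :
  (2 * n + 3)%:R * (2 * wcoef n.+1 i + wcoef n.+1 i.+1)
  = (n + 3)%:R * wcoef n.+2 i.+1 + n%:R * wcoef n i.+1.
Proof.
case: i => [|j]; first by rewrite wcoef0 !wcoef1; ring.
pose u := falling (n%:R : rat) j; pose v := rising (n.+3%:R : rat) j.
pose d := (j.+1`!%:R ^+ 2 * j.+2%:R : rat).
have w1 : wcoef n.+1 j.+1 = u * v / (j`!%:R ^+ 2 * j.+1%:R) by rewrite wcoefE.
have w2 : wcoef n.+1 j.+2 = u * (n%:R - j%:R) * (v * (n.+3 + j)%:R) / d.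
  by rewrite wcoefE fallingSr risingSr natrD.
(* [w3] and [w4] keep the factors [n + 3] and [n] of the recurrence: the latter
   cannot be divided out at [n = 0]. *)
have w3 : (n + 3)%:R * wcoef n.+2 j.+2 =
    n.+1%:R * u * (v * (n.+3 + j)%:R * (n.+3 + j.+1)%:R) / d.
  have r4 : (n + 3)%:R * rising n.+4%:R j.+1 =
      v * (n.+3 + j)%:R * (n.+3 + j.+1)%:R :> rat.
    by rewrite addn3 -(natr1 n.+3) -risingS !risingSr -!natrD.
  by rewrite wcoefE falling_natS -r4 /d /u; ring.
have w4 : n%:R * wcoef n j.+2 =
    u * (n%:R - j%:R) * (n%:R - j.+1%:R) * (n.+2%:R * v) / d.
  by rewrite wcoefE !mulrA mulr_falling_pred !fallingSr risingS natr1 !mulrA.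
rewrite w1 w2 w3 w4 /d factS natrM.
by field; rewrite nat1r -natrD !pnatr_eq0 -[_`! != _]lt0n fact_gt0.
Qed.

Lemma wpoly_rec n : (2%:R *: 'X + 1) * ((2 * n + 3)%:R * wpoly n.+1)
  = (n + 3)%:R * wpoly n.+2 + n%:R * wpoly n :> {poly rat}.
Proof.
apply/polyP => i.
rewrite mulrDl mul1r -scalerAl coefD coefZ coefXM !coefD !mulr_natl !coefMn.
have -> : (wpoly n)`_i *+ n = wcoef n i.+1 *+ n.
  by case: n => [|n]; rewrite ?mulr0n // coef_wpoly.
have -> : (if i == 0%N then 0 else (wpoly n.+1)`_i.-1 *+ (2 * n + 3))
    = wcoef n.+1 i *+ (2 * n + 3).
  by case: i => [|i]; rewrite ?wcoef0 ?mul0rn // coef_wpoly.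
rewrite !coef_wpoly //.
transitivity ((2 * n + 3)%:R * (2 * wcoef n.+1 i + wcoef n.+1 i.+1)); first ring.
by rewrite wcoef_rec; ring.
Qed.

Theorem lemma4p6 (n : nat) (hn : (0 < n)%N) :
  (2%:R *: 'X + 1) *
    (\sum_(1 <= k < n.+1)
        (k * (k + 1) * (2 * k + 1))%:R * (-1) ^+ (n - k) * (wpoly k) ^+ 2)
  = (n * (n + 1) * (n + 2))%:R * wpoly n * wpoly n.+1 :> {poly rat}.
Proof.
(* The identity already holds at [n = 0], where both sides vanish. *)
clear hn; elim: n => [|n IHn]; first by rewrite big_geq // mulr0 !mul0r.
pose c k := (k * (k + 1) * (2 * k + 1))%:R : {poly rat}.
have sign_flip : \sum_(1 <= k < n.+1) c k * (-1) ^+ (n.+1 - k) * wpoly k ^+ 2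
    = - \sum_(1 <= k < n.+1) c k * (-1) ^+ (n - k) * wpoly k ^+ 2.
  rewrite -sumrN; apply: eq_big_nat => k /andP[_ lt_k_n1].
  by rewrite subSn // exprS mulN1r mulrN mulNr.
rewrite big_nat_recr //= sign_flip subnn expr0 mulr1 mulrDr mulrN IHn.
have -> : (2%:R *: 'X + 1) * (c n.+1 * wpoly n.+1 ^+ 2) =
    (n.+1 * n.+2)%:R * wpoly n.+1 * ((2%:R *: 'X + 1) * ((2 * n + 3)%:R * wpoly n.+1)).
  by rewrite /c; ring.
by rewrite wpoly_rec; ring.
Qed.
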